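(* Let $\mathcal P_1$ and $\mathcal P_2$ be two shortest paths between nodes $u_0$ and $u_1$, and let $u_2$ be a node on $\mathcal P_2$ distinct from $u_0,u_1$. Consider the shortest-path triangle $\Delta_{\{u_0,u_1,u_2\}}$ whose sides are $\mathcal P_1$ and the two subpaths of $\mathcal P_2$ from $u_0$ to $u_2$ and from $u_2$ to $u_1$. Then the Hausdorff distance satisfies $$d_H(\mathcal P_1,\mathcal P_2)=\max\Big\{\max_{v_1\in\mathcal P_1}\min_{v_2\in\mathcal P_2}d_{v_1,v_2},\ \max_{v_2\in\mathcal P_2}\min_{v_1\in\mathcal P_1}d_{v_1,v_2}\Big\}\le 6\,\delta_{\Delta_{\{u_0,u_1,u_2\}}}+2.$$
   Context: $G=(V,E)$ is a finite connected undirected graph with $n\ge 4$ nodes and $d_{u,v}$ denotes the shortest-path distance (number of edges). For any four nodes $w_1,w_2,w_3,w_4$, form the three sums $d_{w_1,w_2}+d_{w_3,w_4}$, $d_{w_1,w_3}+d_{w_2,w_4}$, $d_{w_1,w_4}+d_{w_2,w_3}$, order them as $S\le M\le L$, and set $\delta_{w_1,w_2,w_3,w_4}=(L-M)/2$. A shortest-path triangle $\Delta_{\{u_0,u_1,u_2\}}$ consists of three distinct nodes with chosen shortest paths between each pair; $\delta_{\Delta_{\{u_0,u_1,u_2\}}}$ is the maximum of $\delta_{w_1,w_2,w_3,w_4}$ over all quadruples of nodes lying on these three paths. *)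

From HB Require Import structures.
From mathcomp Require Import all_boot all_order all_algebra.
Set Implicit Arguments. Unset Strict Implicit. Unset Printing Implicit Defensive.
Import Order.TTheory GRing.Theory Num.Theory.

(* A graph is a relation e : rel T on a finite type T (assumed symmetric,
   irreflexive, connected in the theorem). *)

Section Graph.
Variables (T : finType) (e : rel T).

Definition walk (k : nat) (u v : T) : bool :=
  [exists p : k.-tuple T, path e u p && (last u p == v)].

(* shortest-path distance: least k with a k-edge walk from u to v
   (in a connected graph such a k is < #|T|). *)
Definition dist (u v : T) : nat := find (fun k => walk k u v) (iota 0 #|T|).

(* u :: p is a shortest path from u to v (p lists the nodes after u) *)
Definition is_sp (u v : T) (p : seq T) : bool :=
  [&& path e u p, last u p == v & size p == dist u v].

(* four-point quantity delta = (L - M)/2 *)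
Definition delta4 (w1 w2 w3 w4 : T) : rat :=
  let s := sort leq [:: dist w1 w2 + dist w3 w4;
                        dist w1 w3 + dist w2 w4;
                        dist w1 w4 + dist w2 w3] in
  (((nth 0 s 2 - nth 0 s 1)%N)%:R / 2)%R.

Definition delta_nodes (V : seq T) : rat := (
  \big[Num.max/0]_(w1 <- V) \big[Num.max/0]_(w2 <- V)
   \big[Num.max/0]_(w3 <- V) \big[Num.max/0]_(w4 <- V) delta4 w1 w2 w3 w4)%R.

(* delta of the shortest-path triangle with sides
   u0 :: p01 (u0 -> u1), u0 :: p02 (u0 -> u2), u2 :: p21 (u2 -> u1) *)
Definition delta_tri (u0 u2 : T) (p01 p02 p21 : seq T) : rat :=
  delta_nodes ((u0 :: p01) ++ (u0 :: p02) ++ (u2 :: p21)).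

(* min_{w in S} dist v w, for nonempty S (default value is dist v (head v S),
   which is attained in S when S is nonempty) *)
Definition dist_set (v : T) (S : seq T) : nat :=
  \big[minn/dist v (head v S)]_(w <- S) dist v w.

Definition hausdorff (P1 P2 : seq T) : nat :=
  maxn (\max_(v1 <- P1) dist_set v1 P2) (\max_(v2 <- P2) dist_set v2 P1).

End Graph.

From HB Require Import structures.
From mathcomp Require Import all_boot all_order all_algebra.
Import Order.TTheory GRing.Theory Num.Theory.
From mathcomp Require Import lra.

Set Implicit Arguments.
Unset Strict Implicit.
Unset Printing Implicit Defensive.

(* In fact [d_H(P1, P2) <= 2 delta] already holds.  Let [v] on [P1] and [w] on
   [P2] be at the same distance [a] from [u0], and [n = d(u0, u1)].  In the
   quadruple [u0, v, w, u1] the sums [d(u0,v) + d(w,u1)] and [d(u0,w) + d(v,u1)]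
   are at most [a + (n - a) = n], while [d(u0,u1) + d(v,w) = n + d(v,w)], so
   [d(v,w) <= L - M <= 2 delta].  Every node of one path has such a partner on
   the other, which bounds both halves of the Hausdorff distance. *)

Lemma sort_leq3 x y z : x <= z -> y <= z ->
  sort leq [:: x; y; z] = [:: minn x y; maxn x y; z].
Proof.
move=> xz yz; apply: (sorted_eq leq_trans anti_leq (sort_sorted leq_total _)).
  by rewrite /= geq_max xz yz !andbT (leq_trans (geq_minl _ _) (leq_maxl _ _)).
rewrite perm_sort; have [//|_] := leqP x y.
by apply/permP => r /=; rewrite addnCA.
Qed.

Lemma mem_last_take (A : eqType) (u v : A) (s : seq A) :
  v \in u :: s -> exists2 a, a <= size s & v = last u (take a s).
Proof.
elim: s u => [|x s IHs] u; first by rewrite inE => /eqP->; exists 0.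
rewrite inE => /orP[/eqP->|/IHs[a le_a ->]]; first by exists 0.
by exists a.+1.
Qed.

Lemma last_take_mem (A : eqType) (u : A) (s : seq A) a :
  last u (take a s) \in u :: s.
Proof.
have := mem_last u (take a s); rewrite !inE => /orP[->//|/mem_take->].
by rewrite orbT.
Qed.

Section Distances.
Variables (T : finType) (e : rel T).

Lemma dist_le_walk k u v : walk e k u v -> dist e u v <= k.
Proof.
move=> wk; rewrite /dist; have [ltkT|leTk] := ltnP k #|T|.
  rewrite leqNgt; apply/negP => /(before_find 0).
  by rewrite nth_iota // add0n wk.
by rewrite (leq_trans (find_size _ _)) ?size_iota.
Qed.

Lemma walk_path u p : path e u p -> walk e (size p) u (last u p).
Proof. by move=> pp; apply/existsP; exists (in_tuple p); rewrite /= pp eqxx. Qed.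

Lemma dist_last_take u p a : path e u p -> dist e u (last u (take a p)) <= a.
Proof.
move=> /(take_path a)/walk_path/dist_le_walk/leq_trans; apply.
by rewrite size_take_min geq_minl.
Qed.

Lemma dist_last_take_last u p a : path e u p ->
  dist e (last u (take a p)) (last u p) <= size p - a.
Proof.
rewrite -{1 3}(cat_take_drop a p) cat_path last_cat -size_drop.
by case/andP=> _ /walk_path/dist_le_walk.
Qed.

Lemma dist_set_le v (S : seq T) w : w \in S -> dist_set e v S <= dist e v w.
Proof.
by rewrite /dist_set => wS; exact: (ge_bigmin_seq _ w predT (dist e v) wS).
Qed.

Lemma delta4_ge_dist w1 w2 w3 w4 :
  dist e w1 w2 + dist e w3 w4 <= dist e w1 w4 ->
  dist e w1 w3 + dist e w2 w4 <= dist e w1 w4 ->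
  ((dist e w2 w3)%:R <= 2 * delta4 e w1 w2 w3 w4 :> rat)%R.
Proof.
set n := dist e w1 w4 => le_x le_y.
have [le_xL le_yL] : (dist e w1 w2 + dist e w3 w4 <= n + dist e w2 w3) /\
                     (dist e w1 w3 + dist e w2 w4 <= n + dist e w2 w3).
  by split; apply: leq_trans (leq_addr _ _).
rewrite /delta4 sort_leq3 //= mulrC divfK // ler_nat.
have le_max : maxn (dist e w1 w2 + dist e w3 w4)
                   (dist e w1 w3 + dist e w2 w4) <= n by rewrite geq_max le_x.
by rewrite leq_subRL ?leq_add2r // (leq_trans le_max (leq_addr _ _)).
Qed.

Lemma delta4_le_delta_nodes (V : seq T) w1 w2 w3 w4 :
  w1 \in V -> w2 \in V -> w3 \in V -> w4 \in V ->
  (delta4 e w1 w2 w3 w4 <= delta_nodes e V)%R.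
Proof.
move=> V1 V2 V3 V4; rewrite /delta_nodes.
apply: (bigmax_sup_seq _ w1 predT) => //.
apply: (bigmax_sup_seq _ w2 predT) => //.
apply: (bigmax_sup_seq _ w3 predT) => //; exact: (le_bigmax_seq _ w4 predT).
Qed.

Lemma delta_nodes_ge0 (V : seq T) : (0 <= delta_nodes e V)%R.
Proof. exact: bigmax_ge_id. Qed.

Lemma dist_same_position u0 u1 p q a :
  is_sp e u0 u1 p -> is_sp e u0 u1 q -> a <= dist e u0 u1 ->
  ((dist e (last u0 (take a p)) (last u0 (take a q)))%:R <=
     2 * delta4 e u0 (last u0 (take a p)) (last u0 (take a q)) u1 :> rat)%R.
Proof.
move=> /and3P[path_p /eqP last_p /eqP size_p].
move=> /and3P[path_q /eqP last_q /eqP size_q] le_a.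
have d0v := dist_last_take a path_p; have d0w := dist_last_take a path_q.
have := dist_last_take_last a path_p; rewrite last_p size_p => dv1.
have := dist_last_take_last a path_q; rewrite last_q size_q => dw1.
by apply: delta4_ge_dist; rewrite -(subnKC le_a) leq_add.
Qed.

Lemma max_dist_set_le_delta_nodes u0 u1 p q (V : seq T) :
  is_sp e u0 u1 p -> is_sp e u0 u1 q ->
  {subset u0 :: p <= V} -> {subset u0 :: q <= V} ->
  ((\max_(v <- u0 :: p) dist_set e v (u0 :: q))%:R <= 2 * delta_nodes e V)%R.
Proof.
move=> sp_p sp_q pV qV; rewrite big_seq.
apply: (big_ind (fun m : nat => m%:R <= 2 * delta_nodes e V)%R).
- by rewrite mulr_ge0 ?delta_nodes_ge0.
- by move=> x y; rewrite natr_max ge_max => -> ->.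
have u1V : u1 \in V by case/and3P: sp_p => _ /eqP <- _; apply/pV/mem_last.
move=> _ /mem_last_take[a le_a ->].
have {}le_a : a <= dist e u0 u1 by case/and3P: sp_p => _ _ /eqP <-.
set v := last u0 (take a p); set w := last u0 (take a q).
have ds : dist_set e v (u0 :: q) <= dist e v w.
  by rewrite dist_set_le ?last_take_mem.
have dd : (delta4 e u0 v w u1 <= delta_nodes e V)%R.
  apply: delta4_le_delta_nodes => //; first exact/pV/mem_head.
    exact/pV/last_take_mem.
  exact/qV/last_take_mem.
apply: le_trans (le_trans _ (dist_same_position sp_p sp_q le_a)) _.
  by rewrite ler_nat.
by rewrite ler_pM2l.
Qed.

Lemma hausdorff_sp_le_delta_nodes u0 u1 p q (V : seq T) :
  is_sp e u0 u1 p -> is_sp e u0 u1 q ->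
  {subset u0 :: p <= V} -> {subset u0 :: q <= V} ->
  ((hausdorff e (u0 :: p) (u0 :: q))%:R <= 2 * delta_nodes e V)%R.
Proof.
move=> sp_p sp_q pV qV; rewrite /hausdorff natr_max ge_max.
by rewrite (max_dist_set_le_delta_nodes sp_p) ?(max_dist_set_le_delta_nodes sp_q).
Qed.

End Distances.

Theorem corollary3 (T : finType) (e : rel T)
  (e_sym : symmetric e) (e_irr : irreflexive e)
  (e_conn : forall u v : T, connect e u v) (hn : 4 <= #|T|)
  (u0 u1 u2 : T) (p1 p2 : seq T)
  (hp1 : is_sp e u0 u1 p1) (hp2 : is_sp e u0 u1 p2)
  (hu2 : u2 \in p2) (hu20 : u2 != u0) (hu21 : u2 != u1) :
  let i := (index u2 p2).+1 in
  ((hausdorff e (u0 :: p1) (u0 :: p2))%:R <=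
     6 * delta_tri e u0 u2 p1 (take i p2) (drop i p2) + 2 :> rat)%R.
Proof.
cbv zeta; set i := (index u2 p2).+1.
set V := (u0 :: p1) ++ (u0 :: take i p2) ++ (u2 :: drop i p2).
have p1V : {subset u0 :: p1 <= V} by move=> x; rewrite mem_cat => ->.
have p2V : {subset u0 :: p2 <= V}.
  move=> x; rewrite -(cat_take_drop i p2) -cat_cons mem_cat.
  case/orP=> [x_take | x_drop]; rewrite !mem_cat; first by rewrite x_take orbT.
  by rewrite !inE x_drop !orbT.
have := hausdorff_sp_le_delta_nodes hp1 hp2 p1V p2V.
have := delta_nodes_ge0 e V; rewrite /delta_tri -/V; lra.
Qed.
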